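(* For every integer $n \geq 1$, \[ 2p(n) - 1 \;=\; \sum_{(a_1,\dots,a_k) \in \mathcal{A}(n)} \left\lfloor \frac{a_{k-1} + a_k}{a_{k-1} + 1} \right\rfloor, \] where $p(n)$ is the number of partitions of $n$.
   Context: An ascending composition of a positive integer $n$ is a finite sequence of positive integers $(a_1,\dots,a_k)$, $k\ge 1$, with $a_1+\dots+a_k=n$ and $a_1\le a_2\le\dots\le a_k$. $\mathcal{A}(n)$ denotes the set of all ascending compositions of $n$, so $|\mathcal{A}(n)| = p(n)$. By convention $a_0 = 0$ for every ascending composition, so for the one-part composition $(n)$ the summand is $\lfloor (0+n)/(0+1)\rfloor = n$. *)

From mathcomp Require Import all_boot.
Set Implicit Arguments. Unset Strict Implicit. Unset Printing Implicit Defensive.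

Definition is_asc_comp (n : nat) (s : seq nat) : bool :=
  [&& 0 < size s, all (fun a => 0 < a) s, sumn s == n & sorted leq s].

(* a_k (last part) and a_{k-1} with the convention a_0 = 0. *)
Definition last_part (s : seq nat) : nat := last 0 s.
Definition prev_part (s : seq nat) : nat := nth 0 (0 :: s) (size s).-1.

Definition summand (s : seq nat) : nat :=
  (prev_part s + last_part s) %/ (prev_part s).+1.

(* Write the summand as 1 + e(s), where e(s) = floor((a_k - 1)/(a_{k-1} + 1))
   counts the ways to cut the last part a_k into j >= 1 copies of a_{k-1} + 1
   followed by a remainder a_k + a_{k-1} - j (a_{k-1} + 1), which then exceeds
   a_{k-1}; to keep the result ascending, a_{k-1} itself is merged into the
   remainder.  Cutting is a bijection from the pairs (s, j), 1 <= j <= e(s), onto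
   the ascending compositions other than (n): the inverse finds the run of equal
   parts c before the last one, re-merges them and restores the part c - 1.
   Hence the sum is p(n) + (p(n) - 1). *)
From mathcomp Require Import all_boot zify.
Set Implicit Arguments. Unset Strict Implicit. Unset Printing Implicit Defensive.

Definition extra (s : seq nat) : nat := (last_part s).-1 %/ (prev_part s).+1.

Definition split_last (s : seq nat) (j : nat) : seq nat :=
  let a := prev_part s in
  take (size s).-2 s ++ nseq j a.+1 ++ [:: last_part s + a - j * a.+1].

(* For c = 1 the restored part c - 1 = 0 is the fictitious a_0 and is dropped. *)
Definition merge_last (t : seq nat) : seq nat * nat :=
  let u := take (size t).-1 t in
  let c := last 0 u in
  let j := count_mem c u in
  ([seq x <- u | x < c] ++ (if c.-1 is 0 then [::] else [:: c.-1])
     ++ [:: last 0 t + j * c - c.-1], j).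

Lemma prev_part_cat2 p a b : prev_part (p ++ [:: a; b]) = a.
Proof.
by rewrite /prev_part size_cat addn2 /= -/(nth 0 (p ++ [:: a; b]) (size p))
  nth_cat ltnn subnn.
Qed.

Lemma last_part_cat2 p a b : last_part (p ++ [:: a; b]) = b.
Proof. by rewrite /last_part last_cat. Qed.

Lemma extra1 b : extra [:: b] = b.-1.
Proof. by rewrite /extra /last_part /prev_part /= divn1. Qed.

Lemma extra_cat2 p a b : extra (p ++ [:: a; b]) = b.-1 %/ a.+1.
Proof. by rewrite /extra prev_part_cat2 last_part_cat2. Qed.

Lemma split_last1 b j : split_last [:: b] j = nseq j 1 ++ [:: b - j].
Proof. by rewrite /split_last /last_part /prev_part /= addn0 muln1. Qed.

Lemma split_last_cat2 p a b j :
  split_last (p ++ [:: a; b]) j = p ++ nseq j a.+1 ++ [:: b + a - j * a.+1].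
Proof.
by rewrite /split_last prev_part_cat2 last_part_cat2 size_cat addn2 take_size_cat.
Qed.

Lemma merge_last_run p j c d : all (fun x => x < c) p -> 0 < j ->
  merge_last (p ++ nseq j c ++ [:: d]) =
  (p ++ (if c.-1 is 0 then [::] else [:: c.-1]) ++ [:: d + j * c - c.-1], j).
Proof.
move=> p_lt_c j_gt0.
have take_eq : take (size (p ++ nseq j c ++ [:: d])).-1 (p ++ nseq j c ++ [:: d])
               = p ++ nseq j c by rewrite catA take_size_cat // !size_cat addn1.
have last_eq : last 0 (p ++ nseq j c) = c.
  by case: (j) j_gt0 => // k _; rewrite last_cat /=; elim: k.
have count_eq : count_mem c (p ++ nseq j c) = j.
  rewrite count_cat count_nseq /= eqxx mul1n.
  suff /count_memPn -> : c \notin p by [].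
  by apply/negP => /(allP p_lt_c); rewrite ltnn.
have filter_eq : [seq x <- p ++ nseq j c | x < c] = p.
  by rewrite filter_cat filter_nseq ltnn mul0n cats0 (all_filterP p_lt_c).
by rewrite /merge_last take_eq last_eq count_eq filter_eq !last_cat.
Qed.

Lemma sorted_leq_cat_cons p x q : sorted leq (p ++ x :: q) =
  [&& all (fun y => y <= x) p, sorted leq p & path leq x q].
Proof.
by rewrite sorted_cat_cons !(sorted_pairwise leq_trans) pairwise_rcons andbA.
Qed.

Lemma path_leq_nseq k c d : path leq c (nseq k c ++ [:: d]) = (c <= d).
Proof. by elim: k => [|k /= ->]; rewrite /= ?andbT ?leqnn. Qed.

Lemma sorted_leq_filter_nseq (u : seq nat) c :
  sorted leq u -> all (fun x => x <= c) u ->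
  u = [seq x <- u | x < c] ++ nseq (count_mem c u) c.
Proof.
elim: u => //= x u IHu; rewrite (path_sortedE leq_trans).
move=> /andP[x_le_u u_sorted] /andP[x_le_c u_le_c].
case: ltnP => [x_lt_c | c_le_x]; first by rewrite (ltn_eqF x_lt_c) add0n /= -IHu.
have /eqP <- : x == c by rewrite eqn_leq x_le_c.
have /all_pred1P -> : all (pred1 x) u.
  by apply/allP => y y_u; rewrite /= eqn_leq (allP x_le_u y y_u) andbT
    (leq_trans (allP u_le_c y y_u)).
by rewrite count_nseq filter_nseq /= eqxx ltnn mul1n.
Qed.

Lemma last2_cases (s : seq nat) : 0 < size s ->
  (exists b, s = [:: b]) \/ exists p a b, s = p ++ [:: a; b].
Proof.
case/lastP: s => // u b _; case/lastP: u => [|p a]; first by left; exists b.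
by right; exists p, a, b; rewrite -!cats1 -catA.
Qed.

Lemma summand_extra n s : is_asc_comp n s -> summand s = 1 + extra s.
Proof.
case/and4P=> s_gt0 s_pos _ _; rewrite /summand /extra.
have : 0 < last_part s.
  by case: s s_gt0 s_pos => // x s _ /allP; apply; exact: mem_last.
case: (last_part s) => // b _.
by rewrite -addSnnS -{1}[(prev_part s).+1]mul1n divnMDl.
Qed.

Lemma split_last_asc_comp n s j : is_asc_comp n s -> 0 < j <= extra s ->
  [/\ is_asc_comp n (split_last s j), 1 < size (split_last s j)
    & merge_last (split_last s j) = (s, j)].
Proof.
case/and4P=> s_gt0 s_pos /eqP s_sum s_sorted /andP[j_gt0].
case: (last2_cases s_gt0) => [[b s_eq] | [p [a [b s_eq]]]].
  move: s_sum; rewrite s_eq extra1 split_last1 /= addn0 => b_eq j_le.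
  have j_lt_b : j < b by lia.
  split.
  - apply/and4P; split; rewrite ?size_cat ?addn1 //.
    + by rewrite all_cat /= andbT subn_gt0 j_lt_b; elim: (j).
    + by rewrite sumn_cat sumn_nseq /= mul1n; apply/eqP; lia.
    + by case: (j) j_gt0 j_lt_b => // k _ /=; rewrite path_leq_nseq subn_gt0.
  - by rewrite size_cat size_nseq addn1.
  - by rewrite (@merge_last_run [::]) //= muln1 subn0 subnK // ltnW.
rewrite s_eq extra_cat2 split_last_cat2 leq_divRL // => j_le.
move: s_pos s_sum s_sorted; rewrite s_eq all_cat sumn_cat sorted_leq_cat_cons /=.
rewrite !andbT => /and3P[p_pos a_pos b_pos] s_sum /and3P[p_le_a p_sorted a_le_b].
have m_ge : a.+1 <= j * a.+1 by rewrite leq_pmull.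
have d_gt : a < b + a - j * a.+1 by lia.
split.
- apply/and4P; split.
  + by rewrite !size_cat /=; lia.
  + by rewrite !all_cat p_pos all_nseq /= andbT orbT; lia.
  + by rewrite !sumn_cat sumn_nseq /= -s_sum; apply/eqP; lia.
  + rewrite -(prednK j_gt0) /= sorted_leq_cat_cons p_sorted path_leq_nseq.
    rewrite prednK // d_gt !andbT.
    by apply: sub_all p_le_a => y; apply: leqW.
- by rewrite !size_cat size_nseq /=; lia.
- rewrite merge_last_run //=.
  have -> : b + a - j * a.+1 + j * a.+1 - a = b by lia.
  by case: (a) a_pos.
Qed.

Lemma sorted_leq_last_run (t : seq nat) : sorted leq t -> 1 < size t ->
  exists p j c d,
    [/\ t = p ++ nseq j c ++ [:: d], all (fun x => x < c) p & 0 < j].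
Proof.
move=> t_sorted t_gt1.
case: (last2_cases (ltnW t_gt1)) => [[b t_eq] | [q [c [d t_eq]]]].
  by rewrite t_eq in t_gt1.
have u_sorted : sorted leq (rcons q c).
  by move: t_sorted; rewrite t_eq sorted_cat_cons => /andP[].
have u_le_c : all (fun y => y <= c) (rcons q c).
  by rewrite all_rcons leqnn; move: t_sorted; rewrite t_eq sorted_leq_cat_cons => /andP[].
exists [seq y <- rcons q c | y < c], (count_mem c (rcons q c)), c, d; split.
- by rewrite t_eq -cat_rcons {1}(sorted_leq_filter_nseq u_sorted u_le_c) catA.
- exact: filter_all.
- by rewrite -cats1 count_cat /= eqxx addn1.
Qed.

Lemma split_last_onto n t : is_asc_comp n t -> 1 < size t ->
  exists s j, [/\ is_asc_comp n s, 0 < j <= extra s & split_last s j = t].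
Proof.
case/and4P=> _ t_pos /eqP t_sum t_sorted /(sorted_leq_last_run t_sorted).
move=> [p [j [c [d [t_eq p_lt_c j_gt0]]]]]; subst t.
move: t_pos t_sum t_sorted; rewrite -[in sorted _ _](prednK j_gt0) /=.
rewrite sorted_leq_cat_cons path_leq_nseq !all_cat all_nseq !sumn_cat sumn_nseq /= !andbT.
rewrite (gtn_eqF j_gt0) => /and3P[p_pos c_pos d_pos] t_sum /and3P[_ p_sorted c_le_d].
have [a c_eq] : exists a, c = a.+1 by exists c.-1; rewrite prednK.
subst c.
have [a0 | a_gt0] := posnP a.
  subst a.
  have p_nil : p = [::].
    by case: (p) p_lt_c p_pos => // x q /andP[x_lt1 _] /andP[x_pos _]; lia.
  rewrite p_nil /= in t_sum *.
  exists [:: d + j], j; split; rewrite ?extra1 ?split_last1 ?addnK //.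
  - by apply/and4P; split => //=; rewrite ?andbT ?addn_gt0 ?d_pos //; apply/eqP; lia.
  - by rewrite j_gt0; lia.
have m_ge : a.+1 <= j * a.+1 by rewrite leq_pmull.
exists (p ++ [:: a; d + j * a.+1 - a]), j; split.
- apply/and4P; split; rewrite ?size_cat ?addn2 //.
  + by rewrite all_cat p_pos /= a_gt0 andbT; lia.
  + by rewrite sumn_cat /=; apply/eqP; lia.
  + rewrite sorted_leq_cat_cons p_sorted /= andbT; apply/andP; split; last by lia.
    by apply: sub_all p_lt_c => y; rewrite ltnS.
- by rewrite extra_cat2 j_gt0 leq_divRL //; lia.
- by rewrite split_last_cat2; do 3 f_equal; lia.
Qed.

Definition split_pairs (l : seq (seq nat)) : seq (seq nat * nat) :=
  [seq (s, j) | s <- l, j <- iota 1 (extra s)].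

Lemma size_split_pairs l : size (split_pairs l) = \sum_(s <- l) extra s.
Proof.
rewrite size_allpairs_dep sumnE big_map.
by apply: eq_bigr => s _; rewrite size_iota.
Qed.

Lemma mem_split_pairs l s j :
  ((s, j) \in split_pairs l) = (s \in l) && (0 < j <= extra s).
Proof.
apply/allpairsPdep/andP => [[x [y [x_l y_iota [-> ->]]]] | [s_l j_range]].
  by move: y_iota; rewrite mem_iota add1n ltnS.
by exists s, j; rewrite mem_iota add1n ltnS.
Qed.

Lemma split_pairs_uniq l : uniq l -> uniq (split_pairs l).
Proof.
move=> l_uniq; apply: allpairs_uniq_dep => // [s _ | [x y] [x' y'] _ _ /= [-> ->]] //.
exact: iota_uniq.
Qed.

Lemma perm_split_pairs n l :
  uniq l -> (forall s, (s \in l) = is_asc_comp n s) ->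
  perm_eq [seq split_last x.1 x.2 | x <- split_pairs l] [seq t <- l | t != [:: n]].
Proof.
move=> l_uniq mem_l.
have merge_split : {in split_pairs l, cancel (fun x => split_last x.1 x.2) merge_last}.
  move=> [s j]; rewrite mem_split_pairs mem_l => /andP[s_asc j_range].
  by case: (split_last_asc_comp s_asc j_range).
apply: uniq_perm.
- by rewrite (map_inj_in_uniq (can_in_inj merge_split)) split_pairs_uniq.
- exact: filter_uniq.
move=> t; rewrite mem_filter; apply/mapP/andP => [[[s j]] | [t_n]].
  rewrite mem_split_pairs mem_l => /andP[s_asc j_range] ->.
  case: (split_last_asc_comp s_asc j_range) => t_asc t_gt1 _.
  by rewrite mem_l t_asc; split => //; apply: contraTneq t_gt1 => ->.
rewrite mem_l => t_asc.
have t_gt1 : 1 < size t.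
  case/and4P: (t_asc) t_n; case: (t) => [|b [|//]] //= _ _ /eqP.
  by rewrite addn0 => ->; rewrite eqxx.
have [s [j [s_asc j_range <-]]] := split_last_onto t_asc t_gt1.
by exists (s, j); rewrite // mem_split_pairs mem_l s_asc.
Qed.

Theorem mainTheorem1 (n : nat) (l : seq (seq nat)) :
  1 <= n -> uniq l -> (forall s, (s \in l) = is_asc_comp n s) ->
  2 * size l - 1 = \sum_(s <- l) summand s.
Proof.
move=> n_gt0 l_uniq mem_l.
have single_l : count_mem [:: n] l = 1.
  by rewrite count_uniq_mem // mem_l /is_asc_comp /= addn0 eqxx n_gt0.
have size_others : size [seq t <- l | t != [:: n]] = (size l).-1.
  by rewrite size_filter -(count_predC (pred1 [:: n]) l) single_l.
rewrite (eq_big_seq (fun s => 1 + extra s)); last first.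
  by move=> s; rewrite mem_l => /summand_extra.
rewrite big_split /= sum1_size -size_split_pairs.
rewrite -(size_map (fun x => split_last x.1 x.2)).
rewrite (perm_size (perm_split_pairs l_uniq mem_l)) size_others.
have := count_size (pred1 [:: n]) l; rewrite single_l; lia.
Qed.
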